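(* Let $(\mathcal{V},\mathcal{I})$ be a finite connected graph with vertex set $\mathcal{V}$ and set of unoriented edges $\mathcal{I}$ (each pair of vertices joined by at most one edge), with $N$ edges, each edge $(i,j)\in\mathcal{I}$ having a length $L_{ij}>0$. Let $(S_i)_{i\in\mathcal{V}}$ be given with $\sum_{i\in\mathcal{V}} S_i=0$. Let $0<\gamma<1$ and $f_\gamma(s):=(\gamma+1)|s|^{\frac{2\gamma}{\gamma+1}}$. For fluxes $Q=(Q_{ij})$, with the convention $Q_{ij}=-Q_{ji}$, define $$F[Q]=\sum_{(i,j)\in\mathcal{I},\, i<j} f_\gamma(Q_{ij})\,L_{ij}.$$ Let $Q\in\mathbb{R}^N$ be a global minimizer of $F$ subject to the local mass conservation constraint $$\sum_{j\in N(i)} Q_{ij}=S_i\quad\text{for all } i\in\mathcal{V},$$ where $N(i)$ is the set of neighbours of $i$. Then $Q$ contains no loops, i.e., there exists no closed circle of edges $\{(i_1,i_2),(i_2,i_3),\dots,(i_K,i_1)\}\subset\mathcal{I}$ such that the fluxes $Q_{i_1i_2},Q_{i_2i_3},\dots,Q_{i_Ki_1}$ are all nonzero.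
   Context: Vertices are indexed by integers; the sum over $i<j$ counts each unoriented edge once. $Q_{ij}>0$ means net flow from vertex $i$ to vertex $j$. $F[Q]$ equals $\inf_{C\in\mathbb{R}^N_+}\sum_{i<j}\big(Q_{ij}^2/C_{ij}+\frac{1}{\gamma}C_{ij}^\gamma\big)L_{ij}$ (metabolic coefficient $\nu=1$). *)

From HB Require Import structures.
From mathcomp Require Import all_boot all_order all_algebra.
From mathcomp Require Import all_classical all_reals all_analysis.
Set Implicit Arguments. Unset Strict Implicit. Unset Printing Implicit Defensive.
Import Order.TTheory GRing.Theory Num.Theory.
Local Open Scope ring_scope.

(* Vertices are 'I_n; the graph is an irreflexive symmetric relation [e]. *)

(* f_gamma(s) = (gamma+1) |s|^(2 gamma/(gamma+1)); powR gives 0 `^ p = 0 for p > 0. *)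
Definition f_gamma {R : realType} (gamma s : R) : R :=
  (gamma + 1) * (`|s| `^ (2 * gamma / (gamma + 1))).

(* Fluxes: Q i j = - Q j i (only values on edges matter). *)
Definition antisym_flux {R : realType} {n : nat} (Q : 'I_n -> 'I_n -> R) : Prop :=
  forall i j, Q i j = - Q j i.

Definition energy {R : realType} {n : nat} (e : rel 'I_n) (L : 'I_n -> 'I_n -> R)
  (gamma : R) (Q : 'I_n -> 'I_n -> R) : R :=
  \sum_(i < n) \sum_(j < n | (i < j)%N && e i j) f_gamma gamma (Q i j) * L i j.

Definition mass_conservation {R : realType} {n : nat} (e : rel 'I_n)
  (S : 'I_n -> R) (Q : 'I_n -> 'I_n -> R) : Prop :=
  forall i, \sum_(j < n | e i j) Q i j = S i.

Definition global_minimizer {R : realType} {n : nat} (e : rel 'I_n)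
  (L : 'I_n -> 'I_n -> R) (S : 'I_n -> R) (gamma : R) (Q : 'I_n -> 'I_n -> R) : Prop :=
  [/\ antisym_flux Q, mass_conservation e S Q &
      forall Q', antisym_flux Q' -> mass_conservation e S Q' ->
        energy e L gamma Q <= energy e L gamma Q'].

Definition has_loop {R : realType} {n : nat} (e : rel 'I_n)
  (Q : 'I_n -> 'I_n -> R) : Prop :=
  exists s : seq 'I_n, [/\ uniq s, (3 <= size s)%N &
    cycle (fun a b => e a b && (Q a b != 0)) s].

(** Along a loop [i_1 -> ... -> i_K -> i_1] with nonzero fluxes, let [t > 0]
    be the smallest of the [|Q_{i_k i_{k+1}}|] and let [c] be the unit
    circulation around the loop.  Both [Q + t c] and [Q - t c] satisfy the
    conservation constraints, and since [p = 2 gamma / (gamma + 1) < 1] makes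
    [s |-> |s| ^ p] concave on each half-line, each edge term satisfies
    [f(a + u) + f(a - u) <= 2 f(a)] whenever [|u| <= |a|], strictly on the
    edge where [|u| = |a| > 0] (there one of the two fluxes vanishes).  Hence
    [F[Q + t c] + F[Q - t c] < 2 F[Q]], so one of them beats [Q]. *)
From HB Require Import structures.
From mathcomp Require Import all_boot all_order all_algebra.
From mathcomp Require Import all_classical all_reals all_analysis.
From mathcomp Require Import lra ring.
Import Order.TTheory GRing.Theory Num.Theory.
Local Open Scope ring_scope.

Section PowerConcavity.
Context {R : realType}.
Implicit Types a p v x : R.

(* Young's inequality with exponents [1/p] and [1/(1-p)]. *)
Lemma powR_le_affine p x : 0 < p < 1 -> 0 <= x -> x `^ p <= p * x + (1 - p).
Proof.
move=> /andP[p0 p1] x0.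
have := conjugate_powR (powR_ge0 x p) ler01 (p := p^-1) (q := (1 - p)^-1).
rewrite !invr_gt0 p0 subr_gt0 p1 !invrK addrC subrK => /(_ isT isT erefl).
by rewrite powR1 -powRrM (mulfV (lt0r_neq0 p0)) powRr1 // mulr1 mul1r mulrC.
Qed.

Lemma powRD_powRB_le p a v : 0 < p < 1 -> 0 <= v <= a ->
  (a + v) `^ p + (a - v) `^ p <= 2 * a `^ p.
Proof.
move=> hp /andP[v0 va].
have [a0|a_neq0] := eqVneq a 0.
  have -> : v = 0 by apply/le_anti; rewrite v0 -a0 va.
  by rewrite a0 subr0 addr0 mulr2n mulrDl mul1r.
have a_gt0 : 0 < a by rewrite lt_neqAle eq_sym a_neq0 (le_trans v0 va).
set w := v / a.
have w0 : 0 <= w by rewrite divr_ge0 // ltW.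
have w1 : 0 <= 1 - w by rewrite subr_ge0 ler_pdivrMr // mul1r.
have -> : a + v = a * (1 + w) by rewrite /w mulrDr mulr1 mulrCA divff ?mulr1.
have -> : a - v = a * (1 - w) by rewrite /w mulrBr mulr1 mulrCA divff ?mulr1.
have w1' : 0 <= 1 + w by rewrite addr_ge0.
rewrite (powRM _ (ltW a_gt0) w1') (powRM _ (ltW a_gt0) w1) -mulrDr mulrC.
rewrite ler_wpM2r ?powR_ge0 //.
have := powR_le_affine _ _ hp w1'; have := powR_le_affine _ _ hp w1.
by move: hp => /andP[? ?]; lra.
Qed.

Lemma gt1_powR_lt a p : 1 < a -> p < 1 -> a `^ p < a.
Proof.
move=> a1 p1; have a0 : 0 < a := lt_trans ltr01 a1.
rewrite /powR (gt_eqF a0) -[ltRHS]lnK ?posrE // ltr_expR.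
have := ln_gt0 a1; nra.
Qed.

End PowerConcavity.

Section EdgeCost.
Context {R : realType}.
Implicit Types g a u : R.

Lemma f_gamma_exponent_itv g : 0 < g < 1 -> 0 < 2 * g / (g + 1) < 1.
Proof.
move=> /andP[g0 g1]; have g1p : 0 < g + 1 by lra.
by rewrite divr_gt0 ?mulr_gt0 //= ltr_pdivrMr // mul1r; lra.
Qed.

Lemma powR_normD_normB p a u : `|u| <= `|a| ->
  `|a + u| `^ p + `|a - u| `^ p = (`|a| + `|u|) `^ p + (`|a| - `|u|) `^ p.
Proof.
have [a0|a0] := leP 0 a; have [u0|u0] := leP 0 u.
- rewrite (ger0_norm a0) (ger0_norm u0) => h.
  by rewrite (ger0_norm (_ : 0 <= a + u)) ?(ger0_norm (_ : 0 <= a - u)) //; lra.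
- rewrite (ger0_norm a0) (ltr0_norm u0) => h.
  rewrite (ger0_norm (_ : 0 <= a + u)) ?(ger0_norm (_ : 0 <= a - u)); try lra.
  by rewrite addrC opprK.
- rewrite (ltr0_norm a0) (ger0_norm u0) => h.
  rewrite (ler0_norm (_ : a + u <= 0)) ?(ler0_norm (_ : a - u <= 0)); try lra.
  by rewrite addrC; congr (_ `^ _ + _ `^ _); lra.
- rewrite (ltr0_norm a0) (ltr0_norm u0) => h.
  rewrite (ler0_norm (_ : a + u <= 0)) ?(ler0_norm (_ : a - u <= 0)); try lra.
  by congr (_ `^ _ + _ `^ _); lra.
Qed.

Lemma f_gammaDB_le g a u : 0 < g < 1 -> `|u| <= `|a| ->
  f_gamma g (a + u) + f_gamma g (a - u) <= 2 * f_gamma g a.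
Proof.
move=> hg hu; rewrite /f_gamma -mulrDr mulrCA; apply: ler_wpM2l; first by lra.
rewrite powR_normD_normB //; apply: powRD_powRB_le.
  exact: f_gamma_exponent_itv.
by rewrite normr_ge0.
Qed.

Lemma f_gammaDB_lt g a u : 0 < g < 1 -> `|u| = `|a| -> a != 0 ->
  f_gamma g (a + u) + f_gamma g (a - u) < 2 * f_gamma g a.
Proof.
move=> hg hu a0; rewrite /f_gamma -mulrDr mulrCA ltr_pM2l; last by lra.
have /andP[p0 p1] := f_gamma_exponent_itv _ hg.
rewrite powR_normD_normB ?hu // subrr powR0 ?gt_eqF // addr0.
have -> : `|a| + `|a| = 2 * `|a| by lra.
rewrite powRM ?normr_ge0 // ltr_pM2r ?powR_gt0 ?normr_gt0 //.
by apply: gt1_powR_lt; rewrite ?ltr1n.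
Qed.

End EdgeCost.

Lemma psumr_gt0 (R : numDomainType) (I : finType) (P : pred I) (F : I -> R) k :
  (forall i, P i -> 0 <= F i) -> P k -> 0 < F k -> 0 < \sum_(i | P i) F i.
Proof.
move=> F_ge0 Pk Fk; rewrite lt_def sumr_ge0 // andbT psumr_neq0 //.
by apply/hasP; exists k; rewrite ?mem_index_enum ?Pk.
Qed.

Section Energy.
Context {R : realType} {n : nat} {e : rel 'I_n} {L : 'I_n -> 'I_n -> R}
  {gamma : R}.
Hypotheses (e_irr : irreflexive e) (e_sym : symmetric e)
  (L_gt0 : forall i j, e i j -> 0 < L i j) (gamma_itv : 0 < gamma < 1).

Lemma antisym_fluxD {Q u : 'I_n -> 'I_n -> R} :
  antisym_flux Q -> antisym_flux u -> antisym_flux (fun i j => Q i j + u i j).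
Proof. by move=> hQ hu i j; rewrite hQ hu opprD. Qed.

Lemma antisym_fluxN {u : 'I_n -> 'I_n -> R} :
  antisym_flux u -> antisym_flux (fun i j => - u i j).
Proof. by move=> hu i j; rewrite hu. Qed.

Lemma mass_conservationD {S} {Q u : 'I_n -> 'I_n -> R} :
  mass_conservation e S Q -> mass_conservation e (fun=> 0) u ->
  mass_conservation e S (fun i j => Q i j + u i j).
Proof. by move=> hQ hu i; rewrite big_split /= hQ hu addr0. Qed.

Lemma mass_conservation0N {u : 'I_n -> 'I_n -> R} :
  mass_conservation e (fun=> 0) u ->
  mass_conservation e (fun=> 0) (fun i j => - u i j).
Proof. by move=> hu i; rewrite sumrN hu oppr0. Qed.

Lemma energyDB_lt {Q u : 'I_n -> 'I_n -> R} :
  antisym_flux Q -> antisym_flux u ->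
  (forall i j, `|u i j| <= `|Q i j|) ->
  (exists i j, [/\ e i j, `|u i j| = `|Q i j| & Q i j != 0]) ->
  energy e L gamma (fun i j => Q i j + u i j) +
    energy e L gamma (fun i j => Q i j - u i j) < 2 * energy e L gamma Q.
Proof.
move=> antiQ antiu u_le [i [j [eij u_eq Q_neq0]]].
have [x [y [xy exy uxy Qxy]]] :
    exists x y : 'I_n, [/\ (x < y)%N, e x y, `|u x y| = `|Q x y| & Q x y != 0].
  case: (ltngtP i j) => [ij|ji|/val_inj ij]; first by exists i, j.
  - by exists j, i; rewrite e_sym antiQ antiu !normrN oppr_eq0.
  - by rewrite ij e_irr in eij.
pose d a b := (2 * f_gamma gamma (Q a b) - f_gamma gamma (Q a b + u a b)
  - f_gamma gamma (Q a b - u a b)) * L a b.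
have d_ge0 a b : e a b -> 0 <= d a b.
  move=> eab; apply: mulr_ge0; last exact: ltW (L_gt0 _ _ eab).
  by have := f_gammaDB_le _ _ _ gamma_itv (u_le a b); lra.
have d_gt0 : 0 < d x y.
  apply: mulr_gt0; last exact: L_gt0 _ _ exy.
  by have := f_gammaDB_lt _ _ _ gamma_itv uxy Qxy; lra.
have : 0 < \sum_(i < n) \sum_(j < n | (i < j)%N && e i j) d i j.
  apply: (@psumr_gt0 _ _ _ _ x) => // [i' _|].
    by apply: sumr_ge0 => j' /andP[_ /d_ge0].
  by apply: (@psumr_gt0 _ _ _ _ y) => [j' /andP[_ /d_ge0]||]; rewrite ?xy.
have -> : \sum_(a < n) \sum_(b < n | (a < b)%N && e a b) d a b =
    2 * energy e L gamma Q - energy e L gamma (fun i j => Q i j + u i j)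
      - energy e L gamma (fun i j => Q i j - u i j).
  rewrite /energy mulr_sumr -!sumrB; apply: eq_bigr => a _.
  by rewrite mulr_sumr -!sumrB; apply: eq_bigr => b _; rewrite /d; ring.
lra.
Qed.

End Energy.

Lemma next_next_neq {T : eqType} {s : seq T} {v : T} :
  uniq s -> (2 < size s)%N -> v \in s -> next s (next s v) != v.
Proof.
move=> us ss vs; case: (rot_to vs) => k s' hr.
have next_s x : next s x = next (v :: s') x by rewrite -hr next_rot.
rewrite !next_s.
have : uniq (v :: s') by rewrite -hr rot_uniq.
have : (2 < size (v :: s'))%N by rewrite -hr size_rot.
case: s' {hr next_s} => [|w [|u r]] //= _.
rewrite !inE eqxx /= => /and4P[/norP[vw /norP[vu _]] _ _ _].
by rewrite eq_sym in vw; rewrite (negbTE vw) eqxx eq_sym.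
Qed.

Lemma mem_next_eq_prev (T : eqType) (s : seq T) i j : uniq s ->
  (j \in s) && (i == next s j) = (i \in s) && (j == prev s i).
Proof.
move=> us; apply/idP/idP.
  by move=> /andP[js /eqP ->]; rewrite mem_next js prev_next // eqxx.
by move=> /andP[iS /eqP ->]; rewrite mem_prev iS next_prev // eqxx.
Qed.

Lemma sumr_pred1 (R : pzSemiRingType) (I : finType) (P : pred I) k :
  \sum_(j | P j) ((j == k)%:R : R) = (P k)%:R.
Proof.
rewrite big_mkcond /= (bigD1 k) //= eqxx big1 ?addr0; first by case: (P k).
by move=> j /negbTE ->; case: (P j).
Qed.

Section Circulation.
Context {R : numDomainType} {T : finType} (s : seq T).

Definition circulation (i j : T) : R :=
  ((i \in s) && (j == next s i))%:R - ((j \in s) && (i == next s j))%:R.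

Lemma circulationN i j : circulation j i = - circulation i j.
Proof. by rewrite /circulation opprB. Qed.

Lemma sum_circulation (e : rel T) i : symmetric e -> uniq s -> cycle e s ->
  \sum_(j | e i j) circulation i j = 0.
Proof.
move=> e_sym us cyc; rewrite /circulation sumrB.
under [X in _ - X]eq_bigr => j _ do rewrite mem_next_eq_prev //.
case si : (i \in s) => /=; last by rewrite !big1 ?subrr.
by rewrite !sumr_pred1 (next_cycle cyc si) e_sym (prev_cycle cyc si) subrr.
Qed.

Lemma circulation_next v : uniq s -> (2 < size s)%N -> v \in s ->
  circulation v (next s v) = 1.
Proof.
move=> us ss vs; rewrite /circulation vs eqxx [v == _]eq_sym.
by rewrite (negbTE (next_next_neq us ss vs)) andbF subr0.
Qed.

Lemma norm_circulation_le (Q : T -> T -> R) t i j :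
  (forall i j, Q i j = - Q j i) -> 0 <= t ->
  (forall v, v \in s -> t <= `|Q v (next s v)|) ->
  `|t * circulation i j| <= `|Q i j|.
Proof.
move=> antiQ t0 t_le; rewrite /circulation.
case: andP => [[si /eqP ->]|_]; case: andP => [[sj /eqP ->]|_];
  rewrite ?subrr ?subr0 ?sub0r ?mulr0 ?mulr1 ?mulrN1 ?normr0 ?normrN
          ?(ger0_norm t0) //.
- exact: t_le.
- by rewrite antiQ normrN t_le.
Qed.

End Circulation.

Theorem lemma2p1 (R : realType) (n : nat) (e : rel 'I_n)
  (L : 'I_n -> 'I_n -> R) (S : 'I_n -> R) (gamma : R) (Q : 'I_n -> 'I_n -> R) :
  irreflexive e -> symmetric e -> (forall x y, connect e x y) ->
  (forall i j, e i j -> 0 < L i j) ->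
  \sum_(i < n) S i = 0 ->
  0 < gamma < 1 ->
  global_minimizer e L S gamma Q ->
  ~ has_loop e Q.
Proof.
move=> e_irr e_sym _ L_gt0 _ gamma_itv [antiQ massQ minQ] [s [us ss cyc]].
have cyc_e : cycle e s by apply: sub_cycle cyc => a b /andP[].
have [v0 v0s] : exists v0, v0 \in s.
  by case: s ss {us cyc cyc_e} => // v0 s' _; exists v0; rewrite mem_head.
have [v vs t_le] := arg_minP (fun v => `|Q v (next s v)|) v0s.
pose u i j := `|Q v (next s v)| * circulation s i j.
have anti_u : antisym_flux u by move=> i j; rewrite /u circulationN mulrN.
have div_u : mass_conservation e (fun=> 0) u.
  by move=> i; rewrite -mulr_sumr sum_circulation ?mulr0.
have u_le i j : `|u i j| <= `|Q i j| by apply: norm_circulation_le.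
have tight_edge : exists i j, [/\ e i j, `|u i j| = `|Q i j| & Q i j != 0].
  exists v, (next s v); have /andP[-> ->] := next_cycle cyc vs.
  by rewrite /u circulation_next // mulr1 normr_id.
have := energyDB_lt e_irr e_sym L_gt0 gamma_itv antiQ anti_u u_le tight_edge.
have := minQ _ (antisym_fluxD antiQ anti_u) (mass_conservationD massQ div_u).
have := minQ _ (antisym_fluxD antiQ (antisym_fluxN anti_u))
  (mass_conservationD massQ (mass_conservation0N div_u)).
lra.
Qed.
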